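(* In the roundabout exploration process described in the context, for every $t\in[N]$, no two active agents are in the same state after step $t$; i.e., for distinct $a_i,a_j\in A(t)$ we have $s_i(t)\neq s_j(t)$.
   Context: Let $n\ge 2$ and $k$ be natural numbers, $T$ a tree on an $n$-element vertex set $V$, and $N=2(n-1)$. Fix a root $r$ and a DFS tour of $T$ starting and ending at $r$ that traverses each edge of $T$ exactly twice, giving a cyclic vertex sequence $(v_1,\dots,v_N,v_{N+1})$ with $v_{N+1}=v_1=r$, and tour edges $e_i=\{v_i,v_{i+1}\}$ for $i\in[N]$ (each an edge of $T$). For $i,j\in[N]$ the circular interval $[\![i,j]\!]$ is $\{i,i+1,\dots,j\}$ if $i\le j$ and $\{i,\dots,N,1,\dots,j\}$ if $i>j$; $[\![i,j[\![$ denotes $[\![i,j]\!]\setminus\{j\}$. Let $\langle G_1,\dots,G_N\rangle$ be graphs on $V$, each containing all but at most $k$ edges of $T$. Roundabout exploration process: there are agents $a_1,\dots,a_N$ with initial states $s_i(0)=i$. For steps $t=1,\dots,N$: (Movement) for every $i\in[N]$, if $s_i(t-1)=q$ then $s_i(t)=(q\bmod N)+1$ if $e_q\in E(G_t)$, and $s_i(t)=q$ otherwise. Let $D_i(t)=[\![i,s_i(t)]\!]$ (the visited states) and $D_i(0)=\{i\}$. (Elimination) Let $A(0)=\{a_1,\dots,a_N\}$; $A(t)$ is obtained from $A(t-1)$ by repeatedly removing an arbitrary agent $a_i$ of the current set that is redundant, i.e. $D_i(t)\subseteq\bigcup D_j(t)$ over the other agents $a_j$ of the current set, until no redundant agent remains.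 The agents in $A(t)$ are called active after step $t$. *)

From mathcomp Require Import all_boot.
Set Implicit Arguments. Unset Strict Implicit. Unset Printing Implicit Defensive.

(* Tour positions, agents and states are natural numbers in 1..N, as in the paper. *)

Definition cint (N i j : nat) : pred nat :=
  fun x => if i <= j then (i <= x <= j) else (i <= x <= N) || (1 <= x <= j).

Definition tour_edge (V : finType) (v : nat -> V) (q : nat) : {set V} :=
  [set v q; v q.+1].

Fixpoint state (V : finType) (N : nat) (v : nat -> V) (G : nat -> {set {set V}})
  (i t : nat) : nat :=
  match t with
  | 0 => i
  | t'.+1 => let q := state N v G i t' in
             if tour_edge v q \in G t then (q %% N).+1 else q
  end.

Definition visited (V : finType) (N : nat) (v : nat -> V) (G : nat -> {set {set V}})
  (t i : nat) : pred nat := cint N i (state N v G i t).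

Definition redundant (D : nat -> pred nat) (A : pred nat) (i : nat) : Prop :=
  A i /\ forall x, D i x -> exists j, [/\ A j, j <> i & D j x].

Definition elim_step (D : nat -> pred nat) (A A' : pred nat) : Prop :=
  exists i, redundant D A i /\ forall x, A' x = A x && (x != i).

Inductive elim_steps (D : nat -> pred nat) : pred nat -> pred nat -> Prop :=
  | elim_refl A : elim_steps D A A
  | elim_cons A A' A'' : elim_step D A A' -> elim_steps D A' A'' -> elim_steps D A A''.

Definition elim_result (D : nat -> pred nat) (A A' : pred nat) : Prop :=
  elim_steps D A A' /\ forall i, ~ redundant D A' i.

Definition is_tree (V : finType) (ET : {set {set V}}) : Prop :=
  [/\ forall e, e \in ET -> #|e| = 2,
      forall x y : V, connect (fun a b => [set a; b] \in ET) x y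
    & #|ET| = #|V| - 1].

Definition dfs_tour (V : finType) (ET : {set {set V}}) (N : nat) (r : V)
  (v : nat -> V) : Prop :=
  [/\ v 1 = r, v N.+1 = r,
      forall q, 1 <= q <= N -> tour_edge v q \in ET
    & forall e, e \in ET -> count (fun q => tour_edge v q == e) (iota 1 N) = 2].

(* Two circular intervals of [1..N] ending at the same state are nested, so if
   two active agents shared a state after step t, the visited set of one of them
   would be contained in that of the other; that agent would be redundant,
   contradicting the fact that the elimination phase only stops when no
   redundant agent remains. Nestedness needs the agents' indices to be positive,
   which holds since active agents start in [1..N]. *)

From mathcomp Require Import all_boot.
From mathcomp Require Import zify.

Lemma cint_nested (N i j s : nat) : 0 < i -> 0 < j ->
  (forall x, cint N i s x -> cint N j s x) \/
  (forall x, cint N j s x -> cint N i s x).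
Proof.
rewrite /cint => i_gt0 j_gt0.
case: (leqP i s) => ?; case: (leqP j s) => ?; case: (leqP i j) => ?.
all: first [by left => x; lia | by right => x; lia].
Qed.

Lemma redundant_of_subset {D : nat -> pred nat} {A : pred nat} {i j : nat} :
  A i -> A j -> j <> i -> (forall x, D i x -> D j x) -> redundant D A i.
Proof. by move=> Ai Aj ji Dij; split=> // x /Dij Djx; exists j. Qed.

Lemma elim_steps_subset {D : nat -> pred nat} {A A' : pred nat} :
  elim_steps D A A' -> forall x, A' x -> A x.
Proof.
elim=> // B B' B'' [i [_ defB']] _ IH x /IH.
by rewrite defB' => /andP[].
Qed.

Lemma active_gt0 {N : nat} {D : nat -> nat -> pred nat} {A : nat -> pred nat} :
  (forall x, A 0 x = (1 <= x <= N)) ->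
  (forall t, 1 <= t <= N -> elim_result (D t) (A t.-1) (A t)) ->
  forall t, t <= N -> forall x, A t x -> 0 < x.
Proof.
move=> A0 elimA; elim=> [_ x|t IH t_lt x Atx]; first by rewrite A0 => /andP[].
have [steps _] := elimA t.+1 t_lt.
exact: (IH (ltnW t_lt) x (elim_steps_subset steps x Atx)).
Qed.

Theorem lemma5 (V : finType) (n k N : nat) (ET : {set {set V}}) (r : V)
  (v : nat -> V) (G : nat -> {set {set V}}) (A : nat -> pred nat) :
  2 <= n -> #|V| = n -> is_tree ET -> N = 2 * (n - 1) ->
  dfs_tour ET N r v ->
  (forall t, 1 <= t <= N ->
     (forall e, e \in G t -> #|e| = 2) /\ #|ET :\: G t| <= k) ->
  (forall x, A 0 x = (1 <= x <= N)) ->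
  (forall t, 1 <= t <= N -> elim_result (visited N v G t) (A t.-1) (A t)) ->
  forall t, 1 <= t <= N ->
  forall i j, A t i -> A t j -> i <> j ->
  state N v G i t <> state N v G j t.
Proof.
(* Only the initial agent set and the elimination rule matter: the argument
   works for arbitrary graphs G t and any tour v. *)
move=> _ _ _ _ _ _ A0 elimA t t_range i j Ai Aj neq_ij same_state.
have [_ no_redundant] := elimA t t_range.
have pos := active_gt0 A0 elimA t (proj2 (andP t_range)).
case: (cint_nested N i j (state N v G j t) (pos i Ai) (pos j Aj)) => sub.
- apply: (no_redundant i (redundant_of_subset Ai Aj (nesym neq_ij) _)) => x.
  by rewrite /visited same_state; exact: sub.
- apply: (no_redundant j (redundant_of_subset Aj Ai neq_ij _)) => x.
  by rewrite /visited same_state; exact: sub.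
Qed.
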